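(* Consider the control-affine system $\dot x = f(x) + g(x)u$ with $f,g$ Lipschitz and $\mathcal{C}^{m-1}$, state set $\mathcal{X}\subset\mathbb{R}^{n_x}$ compact, control set $\mathcal{U}\subset\mathbb{R}^{n_u}$ compact, and a $\mathcal{C}^m$ function $h$ of relative degree $m$. Assume (Assumption 1): the set $\mathcal{X}_e = \{x_e : \exists u_e \in \mathcal{U},\ 0 = f(x_e) + g(x_e)u_e\}$ is closed, convex and known, and $g(x_e)$ has full column rank for every $x_e \in \mathcal{X}_e$. Let $P_{\mathcal{X}_e}(x) = \arg\min\{\|x - x'\|_2 : x' \in \mathcal{X}_e\}$ and $\zeta(x_e) = -g(x_e)^\dagger f(x_e)$. With $\Gamma_i$, $\psi_i$, $a(x)$, $b(x)$ as in the context, let $c(x)$ be a vector orthogonal to $a(x)$ and continuous in $x$, let $d:\mathbb{R}\times\mathbb{R}\to\mathbb{R}$ be continuous with $d(0,0) > 0$, let $u_n$ be a nominal controller, and let $\pi'(x)$ be a minimizer of $\|u - u_n(x)\|_2^2$ over $u \in \mathcal{U}$ subject to $$a(x)^\top u \ge b(x), \qquad c(x)^\top\big[u - \zeta(P_{\mathcal{X}_e}(x))\big] \ge d\big(h(x), \|x - P_{\mathcal{X}_e}(x)\|_2\big).$$ Assume this problem is feasible for each $x \in \mathcal{X}$ and $\pi'(x) \notin \partial\mathcal{U}$. If the system controlled by $\pi'$ is at an equilibrium $(x_e,u_e)$, i.e. $u_e = \pi'(x_e)$ and $0 = f(x_e) + g(x_e)u_e$, then either (i) $u_n(x_e) = u_e$,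 or (ii) $d(h(x_e),0) = 0$ and $u_n(x_e) = \zeta(x_e) - \rho\, c(x_e)$ for some $\rho \ge 0$.
   Context: $h$ has relative degree $m$ means $L_g L_f^{i} h \equiv 0$ for $i = 0,\dots,m-2$. Let $\Gamma_1,\dots,\Gamma_m$ be class $\mathcal{K}$ functions (continuous, strictly increasing, zero at zero) with $\Gamma_i \in \mathcal{C}^{m-i}$; $\psi_0 = h$, $\psi_i = \dot\psi_{i-1} + \Gamma_i(\psi_{i-1})$ for $i = 1,\dots,m-1$ (time derivatives along the system); $a(x) = (L_g L_f^{m-1} h(x))^\top$ and $b(x) = -L_f^m h(x) - \sum_{i=0}^{m-1} L_f^i(\Gamma_{m-i}\circ\psi_{m-i-1})(x)$. $g^\dagger$ denotes the Moore–Penrose pseudoinverse and $\partial\mathcal{U}$ the boundary of $\mathcal{U}$. *)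

From HB Require Import structures.
From mathcomp Require Import all_boot all_order all_algebra.
From mathcomp Require Import all_classical all_reals all_analysis.
Set Implicit Arguments. Unset Strict Implicit. Unset Printing Implicit Defensive.
Import Order.TTheory GRing.Theory Num.Theory.
Import numFieldNormedType.Exports.
Local Open Scope classical_set_scope.
Local Open Scope ring_scope.

Section Defs.
Variable R : realType.

Definition norm2 n (x : 'cV[R]_n) : R := Num.sqrt (\sum_i (x i 0) ^+ 2).

Definition dotv n (v w : 'cV[R]_n) : R := (v^T *m w) 0 0.

(* C^k regularity, via continuity of all partial derivatives (along the
   given finite family of coordinate directions) up to order k. *)
Fixpoint Ck_dirs (V W : normedModType R) (dirs : seq V) (k : nat) (F : V -> W) : Prop :=
  match k with
  | 0 => continuous F
  | k'.+1 => continuous F /\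
      forall v, v \in dirs ->
        (forall x, derivable F x v) /\ Ck_dirs dirs k' (fun x => 'D_v F x)
  end.

Definition coord_dirs n : seq 'cV[R]_n := [seq delta_mx i 0 | i <- enum 'I_n].

Definition Ck n (W : normedModType R) (k : nat) (F : 'cV[R]_n -> W) : Prop :=
  Ck_dirs (coord_dirs n) k F.

Definition Ck1 (k : nat) (F : R -> R) : Prop := Ck_dirs [:: (1 : R)] k F.

(* class K function (on the whole real line) *)
Definition classK (G : R -> R) : Prop :=
  continuous G /\ {mono G : x y / x < y} /\ G 0 = 0.

Definition boundary (T : topologicalType) (A : set T) : set T :=
  closure A `\` interior A.

Definition is_MPinv m n (A : 'M[R]_(m, n)) (B : 'M[R]_(n, m)) : Prop :=
  [/\ A *m B *m A = A, B *m A *m B = B,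
      (A *m B)^T = A *m B & (B *m A)^T = B *m A].
Definition MPinv m n (A : 'M[R]_(m, n)) : 'M[R]_(n, m) :=
  xget 0 [set B | is_MPinv A B].

Definition Lie n (F : 'cV[R]_n -> 'cV[R]_n) (H : 'cV[R]_n -> R) : 'cV[R]_n -> R :=
  fun x => 'D_(F x) H x.
Definition Lie_iter n (F : 'cV[R]_n -> 'cV[R]_n) (k : nat) (H : 'cV[R]_n -> R) :=
  iter k (Lie F) H.
Definition LieG n nu (G : 'cV[R]_n -> 'M[R]_(n, nu)) (H : 'cV[R]_n -> R)
  : 'cV[R]_n -> 'rV[R]_nu :=
  fun x => \row_j 'D_(col j (G x)) H x.

Definition rel_degree n nu (F : 'cV[R]_n -> 'cV[R]_n) (G : 'cV[R]_n -> 'M[R]_(n, nu))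
  (H : 'cV[R]_n -> R) (m : nat) : Prop :=
  forall i, (i.+2 <= m)%N -> forall x, LieG G (Lie_iter F i H) x = 0.

Fixpoint psi n (F : 'cV[R]_n -> 'cV[R]_n) (Gam : nat -> R -> R)
  (H : 'cV[R]_n -> R) (i : nat) : 'cV[R]_n -> R :=
  match i with
  | 0 => H
  | i'.+1 => fun x => Lie F (psi F Gam H i') x + Gam i (psi F Gam H i' x)
  end.

Definition acbf n nu (F : 'cV[R]_n -> 'cV[R]_n) (G : 'cV[R]_n -> 'M[R]_(n, nu))
  (H : 'cV[R]_n -> R) (m : nat) : 'cV[R]_n -> 'cV[R]_nu :=
  fun x => (LieG G (Lie_iter F m.-1 H) x)^T.

Definition bcbf n (F : 'cV[R]_n -> 'cV[R]_n) (Gam : nat -> R -> R)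
  (H : 'cV[R]_n -> R) (m : nat) : 'cV[R]_n -> R :=
  fun x => - Lie_iter F m H x
           - \sum_(i < m) Lie_iter F i (fun y => Gam (m - i)%N (psi F Gam H (m - i - 1)%N y)) x.

End Defs.

(* At a closed-loop equilibrium (x_e, u_e) we have x_e in X_e, so P(x_e) = x_e,
   and the full column rank of g(x_e) gives zeta(x_e) = u_e.  The second
   constraint then reads d(h(x_e), 0) <= 0, hence h(x_e) <> 0 since d(0,0) > 0.
   The vector field f + g u_e vanishes at x_e, so every directional derivative
   along it is zero there; by the relative degree assumption this says that
   L_f L_f^i h (x_e) = 0 for i <= m - 2, and the chain rule propagates this to
   every function built from these by sums, products and compositions, in
   particular to L_f psi_k and to the higher summands of b.  Thus
   psi_k(x_e) = Gamma_k(psi_(k-1)(x_e)) and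
   a(x_e)^T u_e - b(x_e) = Gamma_m(psi_(m-1)(x_e)), which is nonzero because
   h(x_e) <> 0: the CBF constraint is inactive at u_e.  As u_e is also interior
   to U, near u_e the feasible set is the half-space
   c(x_e)^T (u - u_e) >= d(h(x_e), 0), or all of R^nu when d(h(x_e), 0) < 0,
   and the first-order condition for u_e to be the point of it nearest to
   u_n(x_e) is the stated dichotomy. *)

From HB Require Import structures.
From mathcomp Require Import all_boot all_order all_algebra.
From mathcomp Require Import all_classical all_reals all_analysis.
From mathcomp Require Import zify lra.
Import Order.TTheory GRing.Theory Num.Theory.
Import numFieldNormedType.Exports.
Local Open Scope classical_set_scope.
Local Open Scope ring_scope.
Set Implicit Arguments. Unset Strict Implicit. Unset Printing Implicit Defensive.

Section DirectionalDerivative.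
Variables (R : realType) (V : normedModType R).
Implicit Types (f : V -> R) (u v x y : V).

Let line_quotientE f u y s :
  (fun h : R => h^-1 *: (((fun t : R => f (t *: u + y)) \o shift s) (h *: 1)
                         - f (s *: u + y))) =
  (fun h : R => h^-1 *: ((f \o shift (s *: u + y)) (h *: u) - f (s *: u + y))).
Proof. by apply/funext => h /=; rewrite [h *: 1]mulr1 scalerDl addrA. Qed.

Lemma derivable_lineP f u y s :
  derivable (fun t : R => f (t *: u + y)) s 1 <-> derivable f (s *: u + y) u.
Proof. by rewrite /derivable line_quotientE. Qed.

Lemma derive_lineE f u y s :
  'D_1 (fun t : R => f (t *: u + y)) s = 'D_u f (s *: u + y).
Proof. by rewrite /derive line_quotientE. Qed.

Lemma is_derive_lineP f x v (df : R) :
  is_derive (0 : R) (1 : R) (fun t : R => f (t *: v + x)) df <-> is_derive x v f df.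
Proof.
have /= := derivable_lineP f v x 0; have := derive_lineE f v x 0.
rewrite scale0r add0r => DE dE.
split=> -[d <-]; first by split; [exact: dE.1 | rewrite DE].
by split; [exact: dE.2 | rewrite DE].
Qed.

Lemma is_derive_comp1 (G : R -> R) f x v :
  derivable f x v -> derivable G (f x) 1 ->
  is_derive x v (G \o f) ('D_1 G (f x) * 'D_v f x).
Proof.
move=> /derivableP /is_derive_lineP df /derivableP dG.
apply/is_derive_lineP; apply: (is_derive1_comp (g := fun t : R => f (t *: v + x))).
by rewrite scale0r add0r.
Qed.

Lemma is_derive_dirZ f x v (a : R) :
  derivable f x v -> is_derive x (a *: v) f (a * 'D_v f x).
Proof.
move=> /derivableP /is_derive_lineP df.
have dma : is_derive (0 : R) 1 ( *%R a) a.
  have := is_deriveZ a (is_derive_id (0 : R) 1).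
  by rewrite [a *: 1]mulr1.
apply/is_derive_lineP.
have -> : (fun t : R => f (t *: (a *: v) + x)) =
          (fun t : R => f (t *: v + x)) \o ( *%R a).
  by apply/funext => t /=; rewrite scalerA mulrC.
rewrite mulrC; apply: is_derive1_comp; first by rewrite mulr0.
Qed.

Lemma MVT_between0 (phi : R -> R) (t : R) : (forall s, derivable phi s 1) ->
  exists2 s, `|s| <= `|t| & phi t - phi 0 = 'D_1 phi s * t.
Proof.
move=> dphi; have dphiP (s : R) : is_derive s (1 : R) phi ('D_1 phi s) by apply: derivableP.
have cphi (a b : R) : {within `[a, b], continuous phi}.
  by apply: derivable_within_continuous => s _.
case: (leP 0 t) => t0.
  have [s] := MVT_segment t0 (fun s _ => dphiP s) (cphi 0 t).
  rewrite in_itv /= subr0 => /andP[s0 st] E; exists s => //.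
  by rewrite !ger0_norm // (le_trans s0 st).
have [s] := MVT_segment (ltW t0) (fun s _ => dphiP s) (cphi t 0).
rewrite in_itv /= sub0r mulrN => /andP[ts s0] E; exists s.
  by rewrite !ler0_norm ?(ltW t0) // lerN2.
by apply/eqP; rewrite -opprB E opprK.
Qed.

(* Split the quotient along u + w at x + h w: the part along u is a mean value
   of 'D_u f, which converges by continuity of 'D_u f at x. *)
Lemma is_derive_dirD f x u w :
  (forall y, derivable f y u) -> derivable f x w -> {for x, continuous ('D_u f)} ->
  is_derive x (u + w) f ('D_u f x + 'D_w f x).
Proof.
move=> du dw cu.
suff qcvg : (fun h : R => h^-1 *: ((f \o shift x) (h *: (u + w)) - f x)) @ 0^' -->
              'D_u f x + 'D_w f x.
  by split; [apply/cvg_ex; exists ('D_u f x + 'D_w f x) | exact: cvg_lim qcvg].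
pose A := fun h : R => h^-1 *: (f (h *: u + (h *: w + x)) - f (h *: w + x)).
pose B := fun h : R => h^-1 *: ((f \o shift x) (h *: w) - f x).
have -> : (fun h : R => h^-1 *: ((f \o shift x) (h *: (u + w)) - f x)) = A \+ B.
  apply/funext => h; rewrite /A /B /= -scalerDr; congr (_ *: _).
  by rewrite scalerDr -addrA [RHS]addrA subrK.
apply: cvgD; last exact: dw.
apply/cvgrPdist_lt => eps eps0.
have [d /= d0 near_Du] := (nbhs_ballP _ _).1 ((cvgrPdist_lt _ _).1 cu eps eps0).
have k0 : 0 < d / (`|u| + `|w| + 1) by apply: divr_gt0.
near=> h.
have hN0 : h != 0 by near: h; exact: nbhs_dnbhs_neq.
have hsmall : `|h| < d / (`|u| + `|w| + 1) by near: h; exact: dnbhs0_lt.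
have dline (t : R) : derivable (fun t : R => f (t *: u + (h *: w + x))) t 1.
  by apply/derivable_lineP; exact: du.
have [s hs E] := MVT_between0 h dline.
have -> : A h = 'D_u f (s *: u + (h *: w + x)).
  rewrite /A -derive_lineE /= scale0r add0r in E *.
  by rewrite E [h^-1 *: _]mulrC -mulrA mulfV // mulr1.
apply: near_Du; rewrite -ball_normE /ball_ /=.
rewrite (_ : x - _ = - (s *: u + h *: w)); last by rewrite addrA opprD addrCA subrr addr0.
rewrite normrN (le_lt_trans (ler_normD _ _)) // !normrZ.
have le_hs : `|s| * `|u| + `|h| * `|w| <= `|h| * (`|u| + `|w| + 1).
  rewrite !mulrDr mulr1 -addrA lerD ?ler_wpM2r //.
  by rewrite lerDl.
by rewrite (le_lt_trans le_hs) // -ltr_pdivlMr // ltr_wpDl // ?addr_ge0 // ltr01.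
Unshelve. all: by end_near.
Qed.

End DirectionalDerivative.

Notation cbasis i := (delta_mx i (0 : 'I_1)).

Section PartialDerivatives.
Variables (R : realType) (n : nat).
Implicit Types (F : 'cV[R]_n -> R) (v x : 'cV[R]_n).

Lemma col_sum_delta v : v = \sum_(i < n) v i 0 *: cbasis i.
Proof. by rewrite {1}(matrix_sum_delta v); apply: eq_bigr => i _; rewrite big_ord1. Qed.

Lemma is_derive_partials F :
  (forall i x, derivable F x (cbasis i)) -> (forall i, continuous ('D_(cbasis i) F)) ->
  forall v x, is_derive x v F (\sum_(i < n) v i 0 * 'D_(cbasis i) F x).
Proof.
move=> dF cF v; rewrite {1}(col_sum_delta v).
elim: (index_enum _) => [|i s IH] x; first by rewrite !big_nil; exact: is_derive0.
rewrite !big_cons.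
have DiE y : 'D_(v i 0 *: cbasis i) F y = v i 0 * 'D_(cbasis i) F y.
  by have [_ ->] := is_derive_dirZ (v i 0) (dF i y).
have [dsum Dsum] := IH x; rewrite -DiE -Dsum.
apply: (is_derive_dirD (u := v i 0 *: cbasis i)) dsum _ => [y|].
  by have [] := is_derive_dirZ (v i 0) (dF i y).
rewrite /prop_for /continuous_at (funext DiE) DiE.
exact: cvgMl_tmp (cF i x).
Qed.

End PartialDerivatives.

Section Ck1.
Variable R : realType.
Implicit Types G : R -> R.

Lemma Ck1S k G :
  Ck1 k.+1 G <-> [/\ continuous G, forall t, derivable G t 1 & Ck1 k ('D_1 G)].
Proof.
split=> [[cG /(_ 1 (mem_head _ _)) [dG CG]] | [cG dG CG]]; first by split.
by split=> [//|v]; rewrite inE => /eqP ->.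
Qed.

Lemma Ck1W k G : Ck1 k.+1 G -> Ck1 k G.
Proof.
elim: k G => [|k IH] G /Ck1S [cG dG CG]; first exact: cG.
by apply/Ck1S; split; [exact: cG | exact: dG | exact: IH].
Qed.

Lemma Ck1_le k k' G : (k' <= k)%N -> Ck1 k G -> Ck1 k' G.
Proof. by move=> /subnK <-; elim: (k - k')%N => // j IH /Ck1W. Qed.

End Ck1.

Section Ck.
Variables (R : realType) (n : nat).
Implicit Types (F H : 'cV[R]_n -> R) (f : 'cV[R]_n -> 'cV[R]_n).

Lemma CkS (W : normedModType R) k (F : 'cV[R]_n -> W) :
  Ck k.+1 F <->
  continuous F /\ forall i, (forall x, derivable F x (cbasis i)) /\ Ck k ('D_(cbasis i) F).
Proof.
have coordP v : v \in coord_dirs R n <-> exists i, v = cbasis i.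
  split=> [/mapP [i _ ->]|[i ->]]; first by exists i.
  by apply/mapP; exists i; rewrite ?mem_enum.
rewrite /Ck /=; split=> -[cF CF]; split=> //.
  by move=> i; apply: CF; apply/coordP; exists i.
by move=> v /coordP [i ->]; exact: CF.
Qed.

Lemma Ck_continuous (W : normedModType R) k (F : 'cV[R]_n -> W) :
  Ck k F -> continuous F.
Proof. by case: k => [|k] //= []. Qed.

Lemma CkW (W : normedModType R) k (F : 'cV[R]_n -> W) : Ck k.+1 F -> Ck k F.
Proof.
elim: k F => [|k IH] F /CkS [cF CF] //.
by apply/CkS; split=> // i; have [dF /IH] := CF i.
Qed.

Lemma Ck_le (W : normedModType R) k k' (F : 'cV[R]_n -> W) :
  (k' <= k)%N -> Ck k F -> Ck k' F.
Proof. by move=> /subnK <-; elim: (k - k')%N => // j IH /CkW. Qed.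

Lemma Ck_is_derive k F : Ck k.+1 F ->
  forall v x, is_derive x v F (\sum_(i < n) v i 0 * 'D_(cbasis i) F x).
Proof.
move=> /CkS [_ CF]; apply: is_derive_partials => i; first by have [] := CF i.
by have [_ /Ck_continuous] := CF i.
Qed.

Lemma Ck_cst k (a : R) : Ck k (fun _ : 'cV[R]_n => a).
Proof.
elim: k a => [|k IH] a; first exact: cst_continuous.
apply/CkS; split=> [|i]; first exact: cst_continuous.
split=> [x|]; first exact: derivable_cst.
suff -> : 'D_(cbasis i) (fun _ : 'cV[R]_n => a) = fun _ => 0 by [].
by apply/funext => x; exact: derive_cst.
Qed.

Lemma CkD k F H : Ck k F -> Ck k H -> Ck k (fun x => F x + H x).
Proof.
elim: k F H => [|k IH] F H.
  by move=> cF cH x; apply: continuousD; [exact: cF | exact: cH].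
move=> /CkS [cF CF] /CkS [cH CH]; apply/CkS; split=> [x|i].
  by apply: continuousD; [exact: cF | exact: cH].
have [dF DF] := CF i; have [dH DH] := CH i.
have -> : 'D_(cbasis i) (fun x => F x + H x) =
          (fun x => 'D_(cbasis i) F x + 'D_(cbasis i) H x).
  by apply/funext => x; apply: deriveD.
by split=> [x|]; [exact: derivableD | exact: IH].
Qed.

Lemma CkM k F H : Ck k F -> Ck k H -> Ck k (fun x => F x * H x).
Proof.
elim: k F H => [|k IH] F H.
  by move=> cF cH x; apply: continuousM; [exact: cF | exact: cH].
move=> CkF CkH; move: (CkF) (CkH) => /CkS [cF CF] /CkS [cH CH].
apply/CkS; split=> [x|i].
  by apply: continuousM; [exact: cF | exact: cH].
have [dF DF] := CF i; have [dH DH] := CH i.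
have -> : 'D_(cbasis i) (fun x => F x * H x) =
          (fun x => F x * 'D_(cbasis i) H x + H x * 'D_(cbasis i) F x).
  by apply/funext => x; apply: (deriveM (dF x) (dH x)).
split=> [x|]; first exact: (derivableM (dF x) (dH x)).
by apply: CkD; apply: IH => //; exact: CkW.
Qed.

Lemma Ck_sum k m (F : 'I_m -> 'cV[R]_n -> R) :
  (forall i, Ck k (F i)) -> Ck k (fun x => \sum_(i < m) F i x).
Proof.
move=> CF; elim: (index_enum _) => [|i s IH].
  suff -> : (fun x => \sum_(j <- [::]) F j x) = fun _ => 0 by exact: Ck_cst.
  by apply/funext => x; rewrite big_nil.
suff -> : (fun x => \sum_(j <- i :: s) F j x) = fun x => F i x + \sum_(j <- s) F j x.
  exact: CkD.
by apply/funext => x; rewrite big_cons.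
Qed.

Lemma Ck_comp k (G : R -> R) F : Ck1 k G -> Ck k F -> Ck k (fun x => G (F x)).
Proof.
elim: k G F => [|k IH] G F.
  by move=> cG cF x; apply: continuous_comp; [exact: cF | exact: cG].
move=> /Ck1S [cG dG CG] CkF; move: (CkF) => /CkS [cF CF]; apply/CkS.
split=> [x|i]; first by apply: continuous_comp; [exact: cF | exact: cG].
have [dF DF] := CF i.
have -> : 'D_(cbasis i) (fun x => G (F x)) =
          (fun x => 'D_1 G (F x) * 'D_(cbasis i) F x).
  by apply/funext => x; have [] := is_derive_comp1 (dF x) (dG (F x)).
split=> [x|]; first by have [] := is_derive_comp1 (dF x) (dG (F x)).
exact: (CkM (IH _ _ CG (CkW CkF)) DF).
Qed.

Lemma Ck_entry k p q (M : 'cV[R]_n -> 'M[R]_(p, q)) i j :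
  Ck k M -> Ck k (fun x => M x i j).
Proof.
have entry_continuous (N : 'cV[R]_n -> 'M[R]_(p, q)) : continuous N ->
    continuous (fun x => N x i j).
  by move=> cN x; apply: continuous_comp (cN x) (@coord_continuous R p q i j (N x)).
elim: k M => [|k IH] M; first exact: entry_continuous.
move=> /CkS [cM CM]; apply/CkS; split=> [|l]; first exact: entry_continuous.
have [dM DM] := CM l.
have -> : 'D_(cbasis l) (fun x => M x i j) = (fun x => 'D_(cbasis l) M x i j).
  by apply/funext => x; rewrite derive_mx // mxE.
by split=> [x|]; [move: (dM x) => /derivable_mxP; apply | exact: IH].
Qed.

Lemma LieE k f H : Ck k.+1 H ->
  Lie f H = (fun x => \sum_(i < n) f x i 0 * 'D_(cbasis i) H x).
Proof. by move=> CH; apply/funext => x; have [] := Ck_is_derive CH (f x) x. Qed.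

Lemma Ck_Lie k f H : Ck k.+1 H -> Ck k f -> Ck k (Lie f H).
Proof.
move=> CH Cf; rewrite (LieE f CH); apply: Ck_sum => i.
apply: CkM; first exact: Ck_entry.
by move: CH => /CkS [_ /(_ i) []].
Qed.

End Ck.

Section LieGenerated.
Variables (R : realType) (n : nat).
Variables (f : 'cV[R]_n -> 'cV[R]_n) (h : 'cV[R]_n -> R) (m : nat).
Hypotheses (Cf : Ck m.-1 f) (Ch : Ck m h).
Implicit Types (F H : 'cV[R]_n -> R).

(* The functions built from the L_f^l h, l <= j, by the operations occurring
   in psi and b. *)
Inductive lie_generated (j r : nat) : ('cV[R]_n -> R) -> Prop :=
| LG_iter l : (l <= j)%N -> (l + r <= m)%N -> lie_generated j r (Lie_iter f l h)
| LG_add F H : lie_generated j r F -> lie_generated j r H ->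
    lie_generated j r (fun x => F x + H x)
| LG_mul F H : lie_generated j r F -> lie_generated j r H ->
    lie_generated j r (fun x => F x * H x)
| LG_comp (G : R -> R) F : Ck1 r G -> lie_generated j r F ->
    lie_generated j r (fun x => G (F x)).

Lemma Ck_Lie_iter l : (l <= m)%N -> Ck (m - l) (Lie_iter f l h).
Proof.
elim: l => [|l IH] lm; first by rewrite subn0.
have := IH (ltnW lm); rewrite -(subnSK lm) => CLl.
by apply: Ck_Lie CLl _; apply: Ck_le Cf; lia.
Qed.

Lemma lie_generated_Ck j r F : lie_generated j r F -> Ck r F.
Proof.
elim=> {F} [l lj lr|F H _ CF _ CH|F H _ CF _ CH|G F CG _ CF].
- by apply: Ck_le (Ck_Lie_iter _); lia.
- exact: CkD.
- exact: CkM.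
- exact: Ck_comp.
Qed.

Lemma lie_generated_mono j j' r r' F : (j <= j')%N -> (r' <= r)%N ->
  lie_generated j r F -> lie_generated j' r' F.
Proof.
move=> jj rr; elim=> {F} [l lj lr|F H _ IF _ IH|F H _ IF _ IH|G F CG _ IF].
- by apply: LG_iter; lia.
- exact: LG_add.
- exact: LG_mul.
- exact: LG_comp (Ck1_le rr CG) IF.
Qed.

Lemma lie_generated_Lie j r F :
  lie_generated j r.+1 F -> lie_generated j.+1 r (Lie f F).
Proof.
have dLie F' x : lie_generated j r.+1 F' -> derivable F' x (f x).
  by move=> /lie_generated_Ck CF'; have [] := Ck_is_derive CF' (f x) x.
have mono F' : lie_generated j r.+1 F' -> lie_generated j.+1 r F'.
  exact: lie_generated_mono.
elim=> {F} [l lj lr|F H GF IF GH IH|F H GF IF GH IH|G F CG GF IF].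
- by apply: (LG_iter (l := l.+1)); lia.
- suff -> : Lie f (fun x => F x + H x) = (fun x => Lie f F x + Lie f H x).
    exact: LG_add.
  by apply/funext => x; apply: deriveD; exact: dLie.
- suff -> : Lie f (fun x => F x * H x) =
            (fun x => F x * Lie f H x + H x * Lie f F x).
    by apply: LG_add; apply: LG_mul => //; exact: mono.
  by apply/funext => x; apply: deriveM; exact: dLie.
- move: (CG) => /Ck1S [_ dG CG'].
  suff -> : Lie f (fun x => G (F x)) = (fun x => 'D_1 G (F x) * Lie f F x).
    by apply: LG_mul => //; apply: LG_comp CG' (mono _ GF).
  by apply/funext => x; have [] := is_derive_comp1 (dLie _ x GF) (dG (F x)).
Qed.

Lemma lie_generated_Lie_iter k j r F :
  lie_generated j (r + k) F -> lie_generated (j + k) r (Lie_iter f k F).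
Proof.
elim: k r => [|k IH] r; first by rewrite !addn0.
by rewrite addnS -addSn => /IH; rewrite addnS; exact: lie_generated_Lie.
Qed.

Lemma derive_lie_generated_eq0 j r F x w : (0 < r)%N -> lie_generated j r F ->
  (forall l, (l <= j)%N -> 'D_w (Lie_iter f l h) x = 0) -> 'D_w F x = 0.
Proof.
move=> r0 GF DL0; have dF F' : lie_generated j r F' -> derivable F' x w.
  by move=> /lie_generated_Ck /(Ck_le r0) CF'; have [] := Ck_is_derive CF' w x.
elim: GF => {F} [l lj _|F H GF IF GH IH|F H GF IF GH IH|G F CG GF IF].
- exact: DL0.
- by rewrite deriveD ?IF ?IH ?addr0 //; exact: dF.
- by rewrite deriveM ?IF ?IH ?scaler0 ?addr0 //; exact: dF.
- have /Ck1S [_ dG _] := Ck1_le r0 CG.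
  by have [_ ->] := is_derive_comp1 (dF _ GF) (dG (F x)); rewrite IF mulr0.
Qed.

End LieGenerated.

Lemma classK_eq0 (R : realType) (G : R -> R) y : classK G -> G y = 0 -> y = 0.
Proof.
move=> [_ [mono G0]] Gy.
by case: (ltgtP y 0); rewrite // -mono G0 Gy ltxx.
Qed.

Lemma LieG_mulmx (R : realType) n nu (G : 'cV[R]_n -> 'M[R]_(n, nu)) H x u :
  Ck 1 H -> (LieG G H x *m u) 0 0 = 'D_(G x *m u) H x.
Proof.
move=> CH; have DH v : 'D_v H x = \sum_(i < n) v i 0 * 'D_(cbasis i) H x.
  by have [] := Ck_is_derive CH v x.
rewrite DH mxE; under eq_bigr => j _ do rewrite mxE DH mulr_suml.
rewrite exchange_big /=; apply: eq_bigr => i _.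
rewrite mxE mulr_suml; apply: eq_bigr => j _.
by rewrite !mxE mulrAC.
Qed.

Section Equilibrium.
Variables (R : realType) (n nu m : nat).
Variables (f : 'cV[R]_n -> 'cV[R]_n) (g : 'cV[R]_n -> 'M[R]_(n, nu)).
Variables (h : 'cV[R]_n -> R) (Gam : nat -> R -> R).
Variables (xe : 'cV[R]_n) (ue : 'cV[R]_nu).
Hypotheses (Cf : Ck m.-1 f) (Ch : Ck m h) (rd : rel_degree f g h m).
Hypothesis Gam_regular :
  forall i, (1 <= i <= m)%N -> classK (Gam i) /\ Ck1 (m - i) (Gam i).
Hypothesis equilibrium : f xe + g xe *m ue = 0.

Lemma Lie_equilibrium H : Ck 1 H -> Lie f H xe = - (LieG g H xe *m ue) 0 0.
Proof.
move=> CH; have [dH _] := Ck_is_derive CH (g xe *m ue) xe.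
rewrite /Lie; have -> : f xe = - 1 *: (g xe *m ue).
  by rewrite scaleN1r; apply/eqP; rewrite -addr_eq0 equilibrium.
by rewrite LieG_mulmx //; have [_ ->] := is_derive_dirZ (-1) dH; rewrite mulN1r.
Qed.

Lemma Lie_iter_equilibrium l : (l.+2 <= m)%N -> Lie f (Lie_iter f l h) xe = 0.
Proof.
move=> lm; rewrite Lie_equilibrium ?rd ?mul0mx ?mxE ?oppr0 //.
by apply: Ck_le (Ck_Lie_iter Cf Ch _); lia.
Qed.

Lemma Lie_lie_generated_equilibrium j r F : lie_generated f h m j r F ->
  (j.+2 <= m)%N -> (0 < r)%N -> Lie f F xe = 0.
Proof.
move=> GF jm r0; apply: (derive_lie_generated_eq0 Cf Ch r0 GF) => l lj.
by apply: Lie_iter_equilibrium; lia.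
Qed.

Lemma psi_lie_generated k : (k <= m)%N -> lie_generated f h m k (m - k) (psi f Gam h k).
Proof.
elim: k => [|k IH] km; first by rewrite subn0; apply: (@LG_iter _ _ _ _ _ _ _ 0).
have /IH : (k <= m)%N by lia.
have -> : (m - k = (m - k.+1).+1)%N by lia.
move=> Gpsi; have [_ CGam] := Gam_regular (ltac:(lia) : (1 <= k.+1 <= m)%N).
apply: LG_add; first exact: lie_generated_Lie.
by apply: LG_comp CGam _; apply: lie_generated_mono Gpsi.
Qed.

Lemma psi_eq0 k : (k < m)%N -> psi f Gam h k xe = 0 -> h xe = 0.
Proof.
elim: k => [|k IH] km //= psi0; apply: IH; first lia.
have [Gam_K _] := Gam_regular (ltac:(lia) : (1 <= k.+1 <= m)%N).
apply: classK_eq0 Gam_K _; rewrite -psi0 (@Lie_lie_generated_equilibrium k (m - k)).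
- by rewrite add0r.
- by apply: psi_lie_generated; lia.
all: lia.
Qed.

Lemma Lie_iter_cbf_term_equilibrium i : (i.+1 < m)%N ->
  Lie_iter f i.+1 (fun y => Gam (m - i.+1)%N (psi f Gam h (m - i.+1 - 1) y)) xe = 0.
Proof.
move=> im; apply: (@Lie_lie_generated_equilibrium (m - i.+1 - 1 + i) 1); [|lia|lia].
apply: (lie_generated_Lie_iter Cf Ch).
have [_ CGam] := Gam_regular (ltac:(lia) : (1 <= m - i.+1 <= m)%N).
apply: LG_comp; first by apply: Ck1_le CGam; lia.
by apply: lie_generated_mono (psi_lie_generated _); lia.
Qed.

Lemma cbf_slack_equilibrium : (0 < m)%N ->
  dotv (acbf f g h m xe) ue - bcbf f Gam h m xe = Gam m (psi f Gam h m.-1 xe).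
Proof.
move=> m0; have Lm : Lie_iter f m h xe = - (LieG g (Lie_iter f m.-1 h) xe *m ue) 0 0.
  rewrite -{1}(prednK m0) -Lie_equilibrium //.
  by apply: Ck_le (Ck_Lie_iter Cf Ch (leq_pred m)); lia.
rewrite /dotv /acbf trmxK /bcbf (bigD1 (Ordinal m0)) //= big1 => [|[[|i] im] //= _].
  by rewrite Lm subn0 subn1 addr0; lra.
exact: Lie_iter_cbf_term_equilibrium.
Qed.

Lemma cbf_slack_neq0 : (0 < m)%N -> h xe != 0 ->
  dotv (acbf f g h m xe) ue - bcbf f Gam h m xe != 0.
Proof.
move=> m0 hN0; rewrite cbf_slack_equilibrium //; apply: contra hN0 => /eqP Gpsi0.
have [Gam_K _] := Gam_regular (ltac:(lia) : (1 <= m <= m)%N).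
by apply/eqP; apply: (@psi_eq0 m.-1); [lia | exact: classK_eq0 Gam_K Gpsi0].
Qed.

End Equilibrium.

Section InnerProduct.
Variables (R : realType) (n : nat).
Implicit Types (x y z : 'cV[R]_n).

Lemma dotvE x y : dotv x y = \sum_i x i 0 * y i 0.
Proof. by rewrite /dotv mxE; apply: eq_bigr => i _; rewrite mxE. Qed.

Lemma dotvC x y : dotv x y = dotv y x.
Proof. by rewrite !dotvE; apply: eq_bigr => i _; rewrite mulrC. Qed.

Lemma dotvDr x y z : dotv x (y + z) = dotv x y + dotv x z.
Proof. by rewrite !dotvE -big_split; apply: eq_bigr => i _; rewrite mxE mulrDr. Qed.

Lemma dotvZr x y k : dotv x (k *: y) = k * dotv x y.
Proof. by rewrite !dotvE mulr_sumr; apply: eq_bigr => i _; rewrite mxE mulrCA. Qed.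

Lemma dotvZl x y k : dotv (k *: x) y = k * dotv x y.
Proof. by rewrite dotvC dotvZr dotvC. Qed.

Lemma dotvNr x y : dotv x (- y) = - dotv x y.
Proof. by rewrite -scaleN1r dotvZr mulN1r. Qed.

Lemma dotvBr x y z : dotv x (y - z) = dotv x y - dotv x z.
Proof. by rewrite dotvDr dotvNr. Qed.

Lemma dotv0r x : dotv x 0 = 0.
Proof. by rewrite -(scale0r 0) dotvZr mul0r. Qed.

Lemma dotv0l x : dotv 0 x = 0.
Proof. by rewrite dotvC dotv0r. Qed.

Lemma dotvv_ge0 x : 0 <= dotv x x.
Proof. by rewrite dotvE; apply: sumr_ge0 => i _; rewrite -expr2 sqr_ge0. Qed.

Lemma dotvv_eq0 x : (dotv x x == 0) = (x == 0).
Proof.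
apply/idP/eqP => [|->]; last by rewrite dotv0r.
rewrite dotvE psumr_eq0 => [/allP x0|i _]; last by rewrite -expr2 sqr_ge0.
apply/matrixP => i j; rewrite ord1 mxE.
by have /= := x0 i (mem_index_enum i); rewrite -expr2 sqrf_eq0 => /eqP.
Qed.

Lemma norm2_sqr x : norm2 x ^+ 2 = dotv x x.
Proof.
rewrite /norm2 sqr_sqrtr ?dotvE; last by apply: sumr_ge0 => i _; exact: sqr_ge0.
by apply: eq_bigr => i _; rewrite expr2.
Qed.

Lemma norm2_le0 x : norm2 x <= 0 -> x = 0.
Proof.
move=> x0; apply/eqP; rewrite -dotvv_eq0 -norm2_sqr sqrf_eq0 eq_le x0.
exact: sqrtr_ge0.
Qed.

Lemma norm2_0 : norm2 (0 : 'cV[R]_n) = 0.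
Proof. by rewrite /norm2 big1 ?sqrtr0 // => i _; rewrite mxE expr0n. Qed.

Lemma nearest_point_id (K : set 'cV[R]_n) p x : K x ->
  (forall y, K y -> norm2 (x - p) <= norm2 (x - y)) -> p = x.
Proof.
move=> Kx p_min; apply/eqP; rewrite eq_sym -subr_eq0; apply/eqP/norm2_le0.
by apply: le_trans (p_min x Kx) _; rewrite subrr norm2_0.
Qed.

End InnerProduct.

Lemma trmx_mul_unitmx (R : realType) n p (A : 'M[R]_(n, p)) :
  \rank A = p -> A^T *m A \in unitmx.
Proof.
move=> rA; rewrite -row_free_unit -kermx_eq0; apply/eqP/row_matrixP => i.
rewrite row0; set u := row i _.
have uAA0 : u *m (A^T *m A) = 0 by rewrite -row_mul mulmx_ker row0.
have uA0 : u *m A^T = 0.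
  apply: trmx_inj; apply/eqP; rewrite trmx0 -dotvv_eq0 /dotv trmxK.
  by rewrite trmx_mul trmxK mulmxA -(mulmxA u) uAA0 mul0mx mxE.
have rfAT : row_free A^T by rewrite /row_free mxrank_tr rA.
by apply: (row_free_inj rfAT); rewrite uA0 mul0mx.
Qed.

Lemma mulMPinvmx (R : realType) n p (A : 'M[R]_(n, p)) :
  \rank A = p -> MPinv A *m A = 1%:M.
Proof.
move=> rA; have AAu := trmx_mul_unitmx rA.
have [B0MP _ _ _] : is_MPinv A (MPinv A).
  apply: xgetPex; exists (invmx (A^T *m A) *m A^T); split.
  - by rewrite -!mulmxA mulVmx // mulmx1.
  - by rewrite -(mulmxA _ A^T A) mulVmx // mul1mx.
  - by rewrite !trmx_mul trmxK trmx_inv trmx_mul trmxK -mulmxA.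
  - by rewrite -(mulmxA _ A^T A) mulVmx // trmx1.
have E : invmx (A^T *m A) *m (A^T *m (A *m MPinv A *m A)) = MPinv A *m A.
  by rewrite -mulmxA (mulmxA A^T) (mulmxA (invmx _)) mulVmx // mul1mx.
by rewrite B0MP mulVmx // in E.
Qed.

Lemma mulMPinvmxK (R : realType) n p (A : 'M[R]_(n, p)) (u : 'cV[R]_p) :
  \rank A = p -> MPinv A *m (A *m u) = u.
Proof. by move=> rA; rewrite mulmxA mulMPinvmx // mul1mx. Qed.

Lemma le0_of_le_small_mul (R : realType) (p q d : R) : 0 < d ->
  (forall t, 0 < t -> t < d -> p <= t * q) -> p <= 0.
Proof.
move=> d0 pq; rewrite leNgt; apply/negP => p0.
have q1 : 0 < `|q| + 1 by apply: ltr_wpDl.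
pose t := Num.min (d / 2) (p / (`|q| + 1)).
have t0 : 0 < t by rewrite lt_min !divr_gt0.
have td : t < d by rewrite gt_min ltr_pdivrMr // ltr_pMr // ltr1n.
have tq : t * `|q| < p.
  apply: (le_lt_trans (y := p / (`|q| + 1) * `|q|)).
    by rewrite ler_wpM2r // ge_min lexx orbT.
  by rewrite mulrAC ltr_pdivrMr // ltr_pM2l // ltrDl ltr01.
have := pq t t0 td; rewrite leNgt => /negP; apply.
by rewrite (le_lt_trans (ler_norm _)) // normrM gtr0_norm.
Qed.

Lemma lt_affine_near0 (R : realType) (p q s : R) : p < q ->
  exists2 d : R, 0 < d & forall t, 0 < t -> t < d -> p < q + t * s.
Proof.
move=> pq; have s1 : 0 < `|s| + 1 by apply: ltr_wpDl.
exists ((q - p) / (`|s| + 1)) => [|t t0 td]; first by rewrite divr_gt0 // subr_gt0.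
have ts : t * `|s| < q - p.
  apply: (le_lt_trans (y := t * (`|s| + 1))); first by rewrite ler_pM2l // lerDl.
  by rewrite -ltr_pdivlMr.
have : - (t * `|s|) <= t * s by rewrite -mulrN ler_pM2l // lerNnormlW.
lra.
Qed.

Section FeasibleDirections.
Variables (R : realType) (n : nat).
Implicit Types (S T : set 'cV[R]_n) (a c u v w : 'cV[R]_n).

Definition feasible_dir S u w :=
  exists2 d : R, 0 < d & forall t, 0 < t -> t < d -> S (u + t *: w).

Lemma feasible_dirS S T u w : S `<=` T -> feasible_dir S u w -> feasible_dir T u w.
Proof. by move=> ST [d d0 Sd]; exists d => // t t0 td; apply/ST/Sd. Qed.

Lemma feasible_dirI S T u w :
  feasible_dir S u w -> feasible_dir T u w -> feasible_dir (S `&` T) u w.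
Proof.
move=> [d1 d10 Sd1] [d2 d20 Td2]; exists (Num.min d1 d2); first by rewrite lt_min d10.
by move=> t t0; rewrite lt_min => /andP [td1 td2]; split; [exact: Sd1 | exact: Td2].
Qed.

Lemma feasible_dir_interior S u w : interior S u -> feasible_dir S u w.
Proof.
move=> /(nbhs_ballP _ _).1 [r /= r0 Sr].
have [d d0 near0] := lt_affine_near0 (- `|w|) r0.
exists d => // t t0 td; apply: Sr; rewrite -ball_normE /ball_ /=.
rewrite opprD addrA subrr sub0r normrN normrZ gtr0_norm //.
by have := near0 t t0 td; rewrite mulrN subr_gt0.
Qed.

Lemma feasible_dir_halfspace a (b : R) u w :
  b < dotv a u -> feasible_dir [set v | b <= dotv a v] u w.
Proof.
move=> bau; have [d d0 near0] := lt_affine_near0 (dotv a w) bau.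
by exists d => // t t0 td; rewrite /= dotvDr dotvZr ltW // near0.
Qed.

Lemma feasible_dir_cone c (D : R) u w : D <= 0 -> D < 0 \/ 0 <= dotv c w ->
  feasible_dir [set v | D <= dotv c (v - u)] u w.
Proof.
have cE t : dotv c (u + t *: w - u) = 0 + t * dotv c w.
  by rewrite addrC addKr dotvZr add0r.
move=> D0 [Dlt0|cw0].
  have [d d0 near0] := lt_affine_near0 (dotv c w) Dlt0.
  by exists d => // t t0 td; rewrite /= cE ltW // near0.
exists 1 => // t t0 _; rewrite /= cE add0r (le_trans D0) //.
by rewrite mulr_ge0 // ltW.
Qed.

Lemma dotv_sqrB u v : dotv (u - v) (u - v) = dotv u u - 2 * dotv u v + dotv v v.
Proof.
rewrite !dotvBr (dotvC (u - v) u) (dotvC (u - v) v) !dotvBr (dotvC v u).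
by rewrite mulr2n mulrDl mul1r; lra.
Qed.

Lemma feasible_dir_min_dist S u0 un w :
  (forall u, S u -> norm2 (u0 - un) ^+ 2 <= norm2 (u - un) ^+ 2) ->
  feasible_dir S u0 w -> dotv (un - u0) w <= 0.
Proof.
move=> u0_min [d d0 Sd]; set v := un - u0.
rewrite -(pmulr_rle0 _ (ltr0Sn R 1)).
apply: (le0_of_le_small_mul (q := dotv w w) d0) => t t0 td.
have := u0_min _ (Sd t t0 td).
have -> : u0 - un = 0 - v by rewrite sub0r opprB.
have -> : u0 + t *: w - un = t *: w - v by rewrite /v opprB addrA (addrC u0).
rewrite !norm2_sqr !dotv_sqrB !dotvZl !dotvZr !dotv0l (dotvC w v) => le_dist.
by rewrite -(ler_pM2l t0); lra.
Qed.

Lemma dotv_le0_eq0 v : (forall w, dotv v w <= 0) -> v = 0.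
Proof. by move=> v0; apply/eqP; rewrite -dotvv_eq0 eq_le v0 dotvv_ge0. Qed.

Lemma dotv_le0_halfspace v c : (forall w, 0 <= dotv c w -> dotv v w <= 0) ->
  exists2 rho : R, 0 <= rho & v = - (rho *: c).
Proof.
move=> vc; have [c0|cN0] := eqVneq c 0.
  exists 0; rewrite // scale0r oppr0; apply: dotv_le0_eq0 => w.
  by apply: vc; rewrite c0 dotv0l.
have orth w : dotv c w = 0 -> dotv v w = 0.
  move=> cw0; apply/eqP; rewrite eq_le vc ?cw0 //=.
  by rewrite -oppr_le0 -dotvNr vc // dotvNr cw0 oppr0.
have cc0 : dotv c c != 0 by rewrite dotvv_eq0.
set rho := - dotv v c / dotv c c.
exists rho; first by rewrite divr_ge0 ?dotvv_ge0 // oppr_ge0 vc ?dotvv_ge0.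
set w := v + rho *: c.
have cw0 : dotv c w = 0 by rewrite dotvDr dotvZr divfK // (dotvC c v) addrN.
have : dotv w w == 0.
  by rewrite {2}/w dotvDr dotvZr !(dotvC w) orth // cw0 mulr0 addr0.
by rewrite dotvv_eq0 addr_eq0 => /eqP.
Qed.

Lemma min_dist_feasible_cone S u0 un c (D : R) : D <= 0 ->
  (forall w, D < 0 \/ 0 <= dotv c w -> feasible_dir S u0 w) ->
  (forall u, S u -> norm2 (u0 - un) ^+ 2 <= norm2 (u - un) ^+ 2) ->
  un = u0 \/ (D = 0 /\ exists2 rho : R, 0 <= rho & un = u0 - rho *: c).
Proof.
move=> D0 feas u0_min; have opt w cond := feasible_dir_min_dist u0_min (feas w cond).
have unE : un = u0 + (un - u0) by rewrite addrC subrK.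
have [Dlt0|Dge0] := ltrP D 0.
  by left; rewrite unE (dotv_le0_eq0 (fun w => opt w (or_introl Dlt0))) addr0.
right; split; first by apply/eqP; rewrite eq_le D0.
have [rho rho0 vE] := dotv_le0_halfspace (fun w cw => opt w (or_intror cw)).
by exists rho; rewrite // unE vE.
Qed.

End FeasibleDirections.

Unset Implicit Arguments.

Theorem proposition3 (R : realType) (nx nu m : nat)
  (f : 'cV[R]_nx -> 'cV[R]_nx) (g : 'cV[R]_nx -> 'M[R]_(nx, nu))
  (h : 'cV[R]_nx -> R) (X : set 'cV[R]_nx) (U : set 'cV[R]_nu)
  (Gam : nat -> R -> R)
  (c : 'cV[R]_nx -> 'cV[R]_nu) (d : R -> R -> R) (un : 'cV[R]_nx -> 'cV[R]_nu)
  (P : 'cV[R]_nx -> 'cV[R]_nx) (pi' : 'cV[R]_nx -> 'cV[R]_nu)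
  (xe : 'cV[R]_nx) (ue : 'cV[R]_nu) :
  (* system regularity *)
  lipschitz f -> lipschitz g -> Ck m.-1 f -> Ck m.-1 g ->
  compact X -> compact U ->
  (0 < m)%N -> Ck m h -> rel_degree f g h m ->
  (* class K functions Gamma_1, ..., Gamma_m with Gamma_i in C^(m-i) *)
  (forall i, (1 <= i <= m)%N -> classK (Gam i) /\ Ck1 (m - i) (Gam i)) ->
  (* Assumption 1 *)
  let Xe := [set x | exists2 u, U u & f x + g x *m u = 0] in
  closed Xe -> convex_set Xe ->
  (forall x, Xe x -> \rank (g x) = nu) ->
  (* projection onto Xe (Euclidean) *)
  (forall x, Xe (P x) /\ forall x', Xe x' -> norm2 (x - P x) <= norm2 (x - x')) ->
  let zeta := fun x => - (MPinv (g x) *m f x) in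
  let a := acbf f g h m in
  let b := bcbf f Gam h m in
  (* c orthogonal to a and continuous; d continuous with d(0,0) > 0 *)
  (forall x, dotv (c x) (a x) = 0) -> continuous c ->
  continuous (fun p : R * R => d p.1 p.2) -> 0 < d 0 0 ->
  let feas := fun x u =>
    [/\ U u, b x <= dotv (a x) u &
        d (h x) (norm2 (x - P x)) <= dotv (c x) (u - zeta (P x))] in
  (* the QP is feasible on X, pi' is a minimizer, and not on the boundary of U *)
  (forall x, X x -> exists u, feas x u) ->
  (forall x, X x -> feas x (pi' x) /\
     forall u, feas x u -> norm2 (pi' x - un x) ^+ 2 <= norm2 (u - un x) ^+ 2) ->
  (forall x, X x -> ~ boundary U (pi' x)) ->
  (* closed-loop equilibrium *)
  X xe -> ue = pi' xe -> f xe + g xe *m ue = 0 ->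
  un xe = ue \/
  (d (h xe) 0 = 0 /\ exists2 rho : R, 0 <= rho & un xe = zeta xe - rho *: c xe).
Proof.
move=> _ _ Cf _ _ _ m0 Ch rd Gam_regular Xe _ _ rank_g P_proj zeta a b _ _ _ d00
  feas _ pi'_opt pi'_int Xxe ue_pi' eq_e.
have [[Uue bue cue] ue_min] := pi'_opt xe Xxe; rewrite -ue_pi' in Uue bue cue ue_min.
have Pxe : P xe = xe.
  by have [_ P_min] := P_proj xe; apply: (nearest_point_id _ P_min); exists ue.
have zeta_xe : zeta xe = ue.
  have fxe : f xe = - (g xe *m ue) by apply/eqP; rewrite -addr_eq0 eq_e.
  by rewrite /zeta fxe mulmxN opprK mulMPinvmxK // rank_g //; exists ue.
rewrite Pxe subrr norm2_0 zeta_xe subrr dotv0r in cue; set D := d (h xe) 0 in cue *.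
have hN0 : h xe != 0 by apply: contraTneq cue => h0; rewrite /D h0 -ltNge.
have b_lt : b xe < dotv (a xe) ue.
  rewrite lt_def bue andbT -subr_eq0.
  exact: (cbf_slack_neq0 Cf Ch rd Gam_regular eq_e m0 hN0).
have ue_int : interior U ue.
  apply: contrapT => Nint; apply: (pi'_int xe Xxe); rewrite -ue_pi'.
  by split=> //; exact: subset_closure.
have feas_dir w : D < 0 \/ 0 <= dotv (c xe) w -> feasible_dir (feas xe) ue w.
  move=> cond; apply: (feasible_dirS _ (feasible_dirI (feasible_dirI
    (feasible_dir_interior w ue_int) (feasible_dir_halfspace w b_lt))
    (feasible_dir_cone ue cue cond))).
  by move=> u [[Uu bu] cu]; split=> //; rewrite Pxe subrr norm2_0 zeta_xe.
by rewrite zeta_xe; exact: min_dist_feasible_cone cue feas_dir ue_min.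
Qed.
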